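(* Let $M$ be an rfCGS with finite state set $St_M$, let $A$ be a coalition and $s_A=(s_{a_1},\ldots,s_{a_n})$ a natural resource-bounded strategy with recall for $A$ of complexity $k=\mathrm{compl}(s_A)$, where every action has an associated cost and each agent $a$ starts with a fixed non-refillable amount of resource $res(a)=r_a\in\mathbb{N}$. Let the goal be a temporal formula of the form $\varphi\,\mathbf{U}\,\psi$. Then, to decide whether $s_A$ enforces this objective from a state $st\in St_M$, it is sufficient to consider the tree unfolding of the executions prescribed by $s_A$ up to depth $L=|St_M|\cdot 2^{2k^2}\cdot\prod_{a\in A}(r_a+1)$.
   Context: A resource-bounded fuzzy concurrent game structure (rfCGS) is a tuple $(\mathrm{Ag},\mathrm{Ap},\{\mathrm{Act}_a\}_{a\in\mathrm{Ag}},St,st_I,\ell,d,t,res,consume)$: finite nonempty sets of agents, atomic propositions and actions; finite states $St$ with initial $st_I$; weight function $\ell:St\times\mathrm{Ap}\to[0,1]$; availability $d:\mathrm{Ag}\times St\to2^{\mathrm{Act}}$ (nonempty); transition function $t(st,\vec c)$ on joint available actions; non-refillable resource budgets $res:\mathrm{Ag}\to\mathbb{N}$; action costs $consume:\mathrm{Ag}\times\mathrm{Act}\to\mathbb{N}$, each executed action of agent $a$ consuming $consume(a,\alpha)$ from its remaining resource. A natural strategy with recall for agent $a$ is an ordered list of pairs $(r,\alpha)$ where $r$ is a regular expression (concatenation, union, Kleene star) over propositional formulas over $\mathrm{Ap}$ and $\alpha$ is an action available in the last state of every history consistent with $r$; a history $h=q_0\ldots q_n$ is consistent with $r$ if some word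 $w$ in the language of $r$ has $|w|=|h|$ and $q_j\models w[j]$ for all $j$. On a history, the agent plays the action of the first rule whose regular expression the history is consistent with. Its complexity is the total size of the regular expressions; a collective strategy's complexity is the sum over its members. The strategy enforces $\varphi\mathbf{U}\psi$ from $st$ if all paths from $st$ consistent with $s_A$ (other agents acting arbitrarily, within resource constraints) satisfy $\varphi\mathbf{U}\psi$. *)

From HB Require Import structures.
From mathcomp Require Import all_boot all_order all_algebra.
From Stdlib Require List.
Set Implicit Arguments. Unset Strict Implicit. Unset Printing Implicit Defensive.
Import Order.TTheory GRing.Theory Num.Theory.

Record rfCGS (R : Type) := {
  Ag : finType;
  Ap : finType;
  Act : finType;
  St : finType;
  st_I : St;
  ell : St -> Ap -> R;
  avail : Ag -> St -> {set Act};
  trans : St -> {ffun Ag -> Act} -> St;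
  res : Ag -> nat;
  consume : Ag -> Act -> nat
}.

Definition wf_rfCGS (R : realFieldType) (M : rfCGS R) : Prop :=
  [/\ 0 < #|Ag M|, 0 < #|Ap M|, 0 < #|Act M|,
      (forall (q : St M) p, (0 <= ell q p <= 1)%R)
    & (forall (a : Ag M) (q : St M), avail a q != set0)].

Inductive pform (P : Type) : Type :=
| PAtom of P
| PNeg of pform P
| PAnd of pform P & pform P
| POr of pform P & pform P.

Fixpoint pf_size (P : Type) (f : pform P) : nat :=
  match f with
  | PAtom _ => 1
  | PNeg g => (pf_size g).+1
  | PAnd g h => (pf_size g + pf_size h).+1
  | POr g h => (pf_size g + pf_size h).+1
  end.

Fixpoint fval (R : realFieldType) (M : rfCGS R) (q : St M) (f : pform (Ap M)) : R :=
  match f with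
  | PAtom p => ell q p
  | PNeg g => (1 - fval q g)%R
  | PAnd g h => Num.min (fval q g) (fval q h)
  | POr g h => Num.max (fval q g) (fval q h)
  end.

(* q |= f, for a given acceptance criterion [holds] on truth degrees
   (e.g. fun x => x == 1, fun x => 0 < x, fun x => theta <= x). *)
Definition psat (R : realFieldType) (M : rfCGS R) (holds : R -> bool)
  (q : St M) (f : pform (Ap M)) : Prop := holds (fval q f).

Inductive regex (G : Type) : Type :=
| RAtom of G
| RCat of regex G & regex G
| RUnion of regex G & regex G
| RStar of regex G.

Inductive lang (G : Type) : regex G -> list G -> Prop :=
| lang_atom g : lang (RAtom g) [:: g]
| lang_cat r1 r2 w1 w2 : lang r1 w1 -> lang r2 w2 -> lang (RCat r1 r2) (w1 ++ w2)
| lang_unionl r1 r2 w : lang r1 w -> lang (RUnion r1 r2) w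
| lang_unionr r1 r2 w : lang r2 w -> lang (RUnion r1 r2) w
| lang_star_nil r : lang (RStar r) [::]
| lang_star_app r w1 w2 : lang r w1 -> lang (RStar r) w2 -> lang (RStar r) (w1 ++ w2).

Fixpoint re_size (P : Type) (r : regex (pform P)) : nat :=
  match r with
  | RAtom f => pf_size f
  | RCat r1 r2 => (re_size r1 + re_size r2).+1
  | RUnion r1 r2 => (re_size r1 + re_size r2).+1
  | RStar r1 => (re_size r1).+1
  end.

Definition hist_consistent (R : realFieldType) (M : rfCGS R) (holds : R -> bool)
  (h : seq (St M)) (r : regex (pform (Ap M))) : Prop :=
  exists w, lang r w /\ List.Forall2 (psat holds) h w.

Definition nstrategy (R : realFieldType) (M : rfCGS R) :=
  seq (regex (pform (Ap M)) * Act M).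

Definition plays (R : realFieldType) (M : rfCGS R) (holds : R -> bool)
  (s : nstrategy M) (h : seq (St M)) (alpha : Act M) : Prop :=
  exists pre r post,
    s = pre ++ (r, alpha) :: post /\ hist_consistent holds h r /\
    (forall r' b, List.In (r', b) pre -> ~ hist_consistent holds h r').

Definition wf_nstrategy (R : realFieldType) (M : rfCGS R) (holds : R -> bool)
  (a : Ag M) (s : nstrategy M) : Prop :=
  forall r alpha, List.In (r, alpha) s ->
    forall q h, hist_consistent holds (q :: h) r -> alpha \in avail a (last q h).

Definition compl (R : realFieldType) (M : rfCGS R) (A : {set Ag M})
  (s : Ag M -> nstrategy M) : nat :=
  \sum_(a in A) \sum_(rl <- s a) re_size rl.1.

(* Agents outside A act
   arbitrarily (their resources are not bounded, as in RB-ATL). *)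
Definition consistent_hist (R : realFieldType) (M : rfCGS R) (holds : R -> bool)
  (A : {set Ag M}) (s : Ag M -> nstrategy M) (st : St M) (h : seq (St M)) : Prop :=
  exists h', h = st :: h' /\
  exists cs : nat -> {ffun Ag M -> Act M},
    (forall j, j < size h' ->
       [/\ (forall a, cs j a \in avail a (nth st h j)),
           (forall a, a \in A -> plays holds (s a) (take j.+1 h) (cs j a))
         & trans (nth st h j) (cs j) = nth st h j.+1]) /\
    (forall a, a \in A -> \sum_(j < size h') consume a (cs j a) <= res a).

Definition consistent_path (R : realFieldType) (M : rfCGS R) (holds : R -> bool)
  (A : {set Ag M}) (s : Ag M -> nstrategy M) (st : St M) (p : nat -> St M) : Prop :=
  forall n, consistent_hist holds A s st (mkseq p n.+1).

Definition until_path (T : Type) (phi psi : T -> bool) (p : nat -> T) : Prop :=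
  exists i, psi (p i) /\ forall j, j < i -> phi (p j).

Definition until_hist (T : Type) (x0 : T) (phi psi : T -> bool) (h : seq T) : Prop :=
  exists i, i < size h /\ psi (nth x0 h i) /\ forall j, j < i -> phi (nth x0 h j).

Definition enforces (R : realFieldType) (M : rfCGS R) (holds : R -> bool)
  (A : {set Ag M}) (s : Ag M -> nstrategy M) (phi psi : St M -> bool) (st : St M) : Prop :=
  forall p, consistent_path holds A s st p -> until_path phi psi p.

(* Everything s_A does after a history h is determined by the current state,
   the resources already spent by each agent of A, and, for each rule
   expression r, the residual language {u | h u matches r}.  For nonempty h
   this residual is a union of at most |r| fixed languages, one per atom of r,
   so histories fall into at most |St| * 2^k * prod_(a in A) (r_a + 1) <= L
   configurations.  A consistent history with L + 1 states therefore repeats a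
   configuration at positions j1 < j2, and looping forever on the segment
   [j1, j2) gives an infinite path consistent with s_A: the loop costs nothing,
   and every agent of A sees equivalent histories, hence plays the same
   actions.  If s_A enforces phi U psi, this path fulfils it before reaching
   j2, that is, inside the history. *)

From HB Require Import structures.
From mathcomp Require Import all_boot all_order all_algebra.
From mathcomp Require Import boolp zify.
From Stdlib Require List.
Set Implicit Arguments. Unset Strict Implicit. Unset Printing Implicit Defensive.

Lemma cat_eq_cat (T : Type) (h u x1 x2 : seq T) : h ++ u = x1 ++ x2 ->
  (exists u1, x1 = h ++ u1 /\ u = u1 ++ x2) \/
  (exists2 h2, h2 <> [::] & h = x1 ++ h2 /\ x2 = h2 ++ u).
Proof.
elim: h x1 => [|y h IH] [|z x1] //=.
- by move=> ->; left; exists [::].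
- by move=> ->; left; exists (z :: x1).
- by move=> <-; right; exists (y :: h).
case=> -> /IH [[u1 [-> ->]] | [h2 nz_h2 [-> ->]]]; first by left; exists u1.
by right; exists h2.
Qed.

Lemma In_nth_exists (T : Type) (x0 x : T) (s : seq T) :
  List.In x s -> exists2 i, i < size s & nth x0 s i = x.
Proof.
elim: s => //= y s IH [<- | /IH [i lt_i <-]]; first by exists 0.
by exists i.+1.
Qed.

Lemma In_map (A B : Type) (f : A -> B) x (s : seq A) :
  List.In x s -> List.In (f x) (map f s).
Proof. exact: List.in_map. Qed.

Section Matching.
Variables (T G : Type) (sat : T -> G -> Prop).

(* [hist_consistent holds h r] unfolds to [matches (psat holds) r h]. *)
Definition matches (r : regex G) (x : seq T) : Prop :=
  exists w, lang r w /\ List.Forall2 sat x w.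

Lemma matches_atom_size g x : matches (RAtom g) x -> size x = 1.
Proof. by case=> w [L F]; inversion L; subst; apply: List.Forall2_length F. Qed.

Lemma matches_cat r1 r2 x1 x2 :
  matches r1 x1 -> matches r2 x2 -> matches (RCat r1 r2) (x1 ++ x2).
Proof.
move=> [w1 [L1 F1]] [w2 [L2 F2]]; exists (w1 ++ w2).
by split; [exact: lang_cat | exact: List.Forall2_app].
Qed.

Lemma matches_cat_split r1 r2 x : matches (RCat r1 r2) x ->
  exists x1 x2, [/\ x = x1 ++ x2, matches r1 x1 & matches r2 x2].
Proof.
case=> w [L F]; inversion L; subst.
have [x1 [x2 [F1 [F2 ->]]]] := List.Forall2_app_inv_r _ _ F.
by exists x1, x2; split=> //; [exists w1 | exists w2].
Qed.

Lemma matches_unionP r1 r2 x :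
  matches (RUnion r1 r2) x <-> matches r1 x \/ matches r2 x.
Proof.
split=> [[w [L F]] | [[w [L F]] | [w [L F]]]].
- by inversion L; subst; [left | right]; exists w.
- by exists w; split=> //; apply: lang_unionl.
- by exists w; split=> //; apply: lang_unionr.
Qed.

Lemma matches_star_cat r x1 x2 :
  matches r x1 -> matches (RStar r) x2 -> matches (RStar r) (x1 ++ x2).
Proof.
move=> [w1 [L1 F1]] [w2 [L2 F2]]; exists (w1 ++ w2).
by split; [exact: lang_star_app | exact: List.Forall2_app].
Qed.

Lemma matches_star_split r x : matches (RStar r) x -> x = [::] \/
  exists x1 x2, [/\ x1 <> [::], x = x1 ++ x2, matches r x1 & matches (RStar r) x2].
Proof.
case=> w [L F]; remember (RStar r) as rr eqn:E.
elim: L x E F => // [r0 x _ F | r0 w1 w2 L1 _ L2 IH x [E] F]; first by inversion F; left.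
subst r0; have [[|y x1] [x2 [F1 [F2 ->]]]] := List.Forall2_app_inv_r _ _ F; first exact: IH.
by right; exists (y :: x1), x2; split=> //; [exists w1 | exists w2].
Qed.

Definition predcat (X Y : seq T -> Prop) (u : seq T) : Prop :=
  exists u1 u2, [/\ u = u1 ++ u2, X u1 & Y u2].

(* One residual per atom occurrence of [r]: the words that may follow a prefix
   of a match of [r] ending at that atom. *)
Fixpoint residuals (r : regex G) : seq (seq T -> Prop) :=
  match r with
  | RAtom _ => [:: fun u => u = [::]]
  | RCat r1 r2 => map (predcat^~ (matches r2)) (residuals r1) ++ residuals r2
  | RUnion r1 r2 => residuals r1 ++ residuals r2
  | RStar r1 => map (predcat^~ (matches (RStar r1))) (residuals r1)
  end.

Definition completes (r : regex G) (X : seq T -> Prop) (h : seq T) : Prop :=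
  forall v, X v -> matches r (h ++ v).

Definition covered_by_residual (r : regex G) (h u : seq T) : Prop :=
  exists X, [/\ List.In X (residuals r), X u & completes r X h].

Lemma covered_star r h u :
  (forall h u, h <> [::] -> matches r (h ++ u) -> covered_by_residual r h u) ->
  h <> [::] -> matches (RStar r) (h ++ u) -> covered_by_residual (RStar r) h u.
Proof.
move=> IH; elim: {h}(size h).+1 {-2}h u (ltnSn (size h)) => // n IHn h u lt_h nz_h.
case/matches_star_split=> [/(congr1 size) | [x1 [x2 [nz_x1 E m1 m2]]]].
  by rewrite size_cat; case: h nz_h {lt_h}.
case: (cat_eq_cat E) => [[u1 [Ex1 ->]] | [h2 nz_h2 [Eh Ex2]]]; [subst x1 | subst x2].
  have [X [inX Xu1 resX]] := IH _ _ nz_h m1.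
  exists (predcat X (matches (RStar r))); split; first exact: (In_map (predcat^~ _) inX).
    by exists u1, x2.
  by move=> _ [v1 [v2 [-> Xv1 m_v2]]]; rewrite catA; apply: matches_star_cat (resX _ Xv1) m_v2.
have lt_h2 : size h2 < n.
  by move: lt_h; rewrite Eh size_cat; case: x1 nz_x1 {E m1 Eh} => // ? x1 _; rewrite /= ltnS; lia.
have [X [inX Xu resX]] := IHn _ _ lt_h2 nz_h2 m2.
by exists X; split=> // v Xv; rewrite Eh -catA; apply: matches_star_cat m1 (resX _ Xv).
Qed.

Lemma matches_residual r h u :
  h <> [::] -> matches r (h ++ u) -> covered_by_residual r h u.
Proof.
elim: r h u => [g | r1 IH1 r2 IH2 | r1 IH1 r2 IH2 | r1 IH1] h u nz_h.
- move=> m; have := matches_atom_size m; rewrite size_cat.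
  case: h nz_h m => [|y [|? ?]] //= _ m; case: u m => // m _.
  by exists (fun u => u = [::]); split=> //; [left | move=> _ ->].
- case/matches_cat_split=> x1 [x2 [E m1 m2]].
  case: (cat_eq_cat E) => [[u1 [Ex1 ->]] | [h2 nz_h2 [-> Ex2]]]; [subst x1 | subst x2].
    have [X [inX Xu1 resX]] := IH1 _ _ nz_h m1.
    exists (predcat X (matches r2)); split.
    + by apply: List.in_or_app; left; apply: (In_map (predcat^~ _) inX).
    + by exists u1, x2.
    + by move=> _ [v1 [v2 [-> Xv1 m_v2]]]; rewrite catA; apply: matches_cat (resX _ Xv1) m_v2.
  have [X [inX Xu resX]] := IH2 _ _ nz_h2 m2.
  exists X; split=> //; first by apply: List.in_or_app; right.
  by move=> v Xv; rewrite -catA; apply: matches_cat m1 (resX _ Xv).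
- case/matches_unionP=> [/(IH1 _ _ nz_h) | /(IH2 _ _ nz_h)] [X [inX Xu resX]]; exists X.
  + split=> //; first by apply: List.in_or_app; left.
    by move=> v /resX m; apply/matches_unionP; left.
  + split=> //; first by apply: List.in_or_app; right.
    by move=> v /resX m; apply/matches_unionP; right.
- exact: covered_star.
Qed.

End Matching.

Section RuleTests.
Variables (T G B : Type) (sat : T -> G -> Prop).

Fixpoint rule_tests (s : seq (regex G * B)) : seq (seq T -> Prop) :=
  if s is (r, _) :: s' then map (completes sat r) (residuals sat r) ++ rule_tests s'
  else [::].

Lemma In_rule_tests s r b X : List.In (r, b) s -> List.In X (residuals sat r) ->
  List.In (completes sat r X) (rule_tests s).
Proof.
elim: s => //= -[r' b'] s IH [[-> _] inX | in_s inX]; apply: List.in_or_app.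
  by left; apply: In_map.
by right; apply: IH.
Qed.

Lemma matches_rule_tests s r b h h' u : List.In (r, b) s -> h <> [::] ->
  (forall t, List.In t (rule_tests s) -> t h -> t h') ->
  matches sat r (h ++ u) -> matches sat r (h' ++ u).
Proof.
move=> in_s nz_h tests_hh' /(matches_residual nz_h) [X [inX Xu complX]].
exact: (tests_hh' _ (In_rule_tests in_s inX) complX).
Qed.

End RuleTests.

Definition test_signature (T : Type) n (ts : seq (seq T -> Prop)) (h : seq T) :
  {ffun 'I_n -> bool} :=
  [ffun i : 'I_n => `[< nth (fun _ => True) ts i h >]].

Lemma test_signature_In (T : Type) n (ts : seq (seq T -> Prop)) h h' t :
  size ts <= n -> test_signature n ts h = test_signature n ts h' ->
  List.In t ts -> t h -> t h'.
Proof.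
move=> le_n E /(In_nth_exists (fun _ => True)) [i lt_i <-] th.
have := congr1 (fun f : {ffun 'I_n -> bool} => f (Ordinal (leq_trans lt_i le_n))) E.
by rewrite !ffunE /= => Ei; apply/asboolP; rewrite -Ei; apply/asboolP.
Qed.

Lemma size_residuals (T P : Type) (sat : T -> pform P -> Prop) r :
  size (residuals sat r) <= re_size r.
Proof.
elim: r => [f | r1 IH1 r2 IH2 | r1 IH1 r2 IH2 | r1 IH1] /=; rewrite ?size_cat ?size_map.
- by case: f.
- exact/leqW/leq_add.
- exact/leqW/leq_add.
- exact: leqW.
Qed.

Lemma size_rule_tests (T P B : Type) (sat : T -> pform P -> Prop)
    (s : seq (regex (pform P) * B)) :
  size (rule_tests sat s) <= \sum_(rl <- s) re_size rl.1.
Proof.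
elim: s => [|[r b] s IH]; first by rewrite big_nil.
by rewrite big_cons /= size_cat size_map leq_add // size_residuals.
Qed.

Lemma take_mkseq (T : Type) (f : nat -> T) m n :
  m <= n -> take m (mkseq f n) = mkseq f m.
Proof. by move=> le_mn; rewrite /mkseq -map_take take_iota (minn_idPl le_mn). Qed.

Lemma leq_sum_ord_prefix (F : nat -> nat) m n :
  m <= n -> \sum_(i < m) F i <= \sum_(i < n) F i.
Proof.
move=> le_mn; rewrite (big_ord_widen n F le_mn) big_mkcond /=.
by apply: leq_sum => i _; case: ifP.
Qed.

Lemma pigeonhole_ord (T : finType) n (f : 'I_n -> T) :
  #|T| < n -> exists i j : 'I_n, i < j /\ f i = f j.
Proof.
move=> lt_Tn; have /injectivePn [i [j neq_ij Efij]] : ~~ injectiveb f.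
  by apply/injectiveP => /leq_card; rewrite card_ord leqNgt lt_Tn.
case: (ltngtP i j) => [lt_ij | lt_ji | /val_inj eq_ij].
- by exists i, j; split=> //; apply/eqP.
- by exists j, i; split=> //; apply/eqP; rewrite eq_sym.
- by rewrite eq_ij eqxx in neq_ij.
Qed.

Section Lasso.
Variables j1 j2 : nat.

Fixpoint lasso n :=
  if n is n'.+1 then (if (lasso n').+1 == j2 then j1 else (lasso n').+1) else 0.

Lemma lassoS n : lasso n.+1 = if (lasso n).+1 == j2 then j1 else (lasso n).+1.
Proof. by []. Qed.

Lemma lasso_id n : n < j2 -> lasso n = n.
Proof.
elim: n => [|n IH] //= lt_n; rewrite IH ?(ltnW lt_n) //.
by case: eqP => // E; rewrite E ltnn in lt_n.
Qed.

Hypothesis lt_j12 : j1 < j2.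

Lemma lasso_lt n : lasso n < j2.
Proof.
elim: n => [|n IH] /=; first exact: leq_ltn_trans lt_j12.
by case: eqP => // /eqP ne; rewrite ltn_neqAle ne IH.
Qed.

Lemma lasso_le n : lasso n <= n.
Proof.
elim: n => [|n IH] //=; case: eqP => [E|_]; last by rewrite ltnS.
by apply/ltnW/(leq_trans lt_j12); rewrite -E ltnS.
Qed.

Lemma until_hist_of_lasso (T : Type) (x0 : T) (h : seq T) (phi psi : T -> bool) :
  j2 <= size h -> until_path phi psi (fun n => nth x0 h (lasso n)) ->
  until_hist x0 phi psi h.
Proof.
move=> le_j2 [i [psi_i phi_lt_i]]; exists (lasso i).
split; first exact: leq_trans (lasso_lt i) le_j2.
split=> // j lt_j; have lt_j2 : j < j2 := ltn_trans lt_j (lasso_lt i).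
by rewrite -(lasso_id lt_j2); apply: phi_lt_i; apply: leq_trans lt_j (lasso_le i).
Qed.

End Lasso.

Section Strategies.
Variables (R : realFieldType) (M : rfCGS R) (holds : R -> bool).
Variables (A : {set Ag M}) (s : Ag M -> nstrategy M).
Local Notation St := (St M).
Local Notation joint := {ffun Ag M -> Act M}.

Definition strategy_equiv (sa : nstrategy M) (x y : seq St) : Prop :=
  forall r b, List.In (r, b) sa ->
  forall u, hist_consistent holds (x ++ u) r <-> hist_consistent holds (y ++ u) r.

Lemma strategy_equiv_sym sa x y : strategy_equiv sa x y -> strategy_equiv sa y x.
Proof. by move=> E r b in_sa u; rewrite (E r b in_sa u). Qed.

Lemma strategy_equiv_trans sa x y z :
  strategy_equiv sa x y -> strategy_equiv sa y z -> strategy_equiv sa x z.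
Proof. by move=> Exy Eyz r b in_sa u; rewrite (Exy r b in_sa u) (Eyz r b in_sa u). Qed.

Lemma strategy_equiv_rcons sa x y q :
  strategy_equiv sa x y -> strategy_equiv sa (rcons x q) (rcons y q).
Proof. by move=> E r b in_sa u; rewrite !cat_rcons; apply: E in_sa (q :: u). Qed.

Lemma plays_equiv sa x y b :
  strategy_equiv sa x y -> plays holds sa x b -> plays holds sa y b.
Proof.
move=> E [pre [r [post [Esa [xr not_pre]]]]].
have Eu r' b' : List.In (r', b') sa -> hist_consistent holds x r' <-> hist_consistent holds y r'.
  by move=> /E /(_ [::]); rewrite !cats0.
have in_pre r' b' : List.In (r', b') pre -> List.In (r', b') sa.
  by rewrite Esa => in_pre; apply: List.in_or_app; left.
exists pre, r, post; split=> //; split.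
  by apply/(Eu r b) => //; rewrite Esa; apply: List.in_or_app; right; left.
by move=> r' b' in_r' /(Eu _ _ (in_pre _ _ in_r')); apply: not_pre in_r'.
Qed.

Lemma strategy_equiv_signature n sa x y :
  size (rule_tests (psat holds) sa) <= n -> x <> [::] -> y <> [::] ->
  test_signature n (rule_tests (psat holds) sa) x =
  test_signature n (rule_tests (psat holds) sa) y ->
  strategy_equiv sa x y.
Proof.
move=> le_n nz_x nz_y E r b in_sa u.
split; apply: (matches_rule_tests in_sa) => // t in_t.
  exact: test_signature_In le_n E in_t.
exact: test_signature_In le_n (esym E) in_t.
Qed.

Variable st : St.

Definition legal_step (h : seq St) (c : joint) (j : nat) : Prop :=
  [/\ forall a, c a \in avail a (nth st h j),
      forall a, a \in A -> plays holds (s a) (take j.+1 h) (c a)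
    & trans (nth st h j) c = nth st h j.+1].

Definition spent (cs : nat -> joint) a n := \sum_(t < n) consume a (cs t a).

Section Pumping.
Variables (h0 : seq St) (cs : nat -> joint).
Hypothesis steps : forall j, j < size h0 -> legal_step (st :: h0) (cs j) j.
Hypothesis within_budget : forall a, a \in A -> spent cs a (size h0) <= res a.
Local Notation h := (st :: h0).

Variables j1 j2 : nat.
Hypotheses (lt_j12 : j1 < j2) (le_j2 : j2 <= size h0).
Hypothesis same_state : nth st h j1 = nth st h j2.
Hypothesis same_spent : forall a, a \in A -> spent cs a j1 = spent cs a j2.
Hypothesis same_view :
  forall a, a \in A -> strategy_equiv (s a) (take j1.+1 h) (take j2.+1 h).

Local Notation f := (lasso j1 j2).
Let lasso_path n := nth st h (f n).

Lemma lasso_lt_size n : f n < size h0.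
Proof. exact: leq_trans (lasso_lt lt_j12 n) le_j2. Qed.

Lemma spent_lasso a n : a \in A ->
  \sum_(j < n) consume a (cs (f j) a) = spent cs a (f n).
Proof.
move=> Aa; elim: n => [|n IH]; first by rewrite big_ord0 /spent big_ord0.
rewrite big_ord_recr /= IH; case: eqP => [E | _]; last by rewrite /spent big_ord_recr.
by rewrite same_spent //; move: (f n) E => m <-; rewrite /spent big_ord_recr.
Qed.

Lemma lasso_path_equiv a n : a \in A ->
  strategy_equiv (s a) (mkseq lasso_path n.+1) (take (f n).+1 h).
Proof.
move=> Aa; elim: n => [|n IH]; first by rewrite /= take0 => r b _ u; split.
have lt_fn1 : (f n).+1 < size h by rewrite /= ltnS lasso_lt_size.
rewrite mkseqS; apply: strategy_equiv_trans (strategy_equiv_rcons _ IH) _.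
rewrite /lasso_path lassoS; case: eqP => [E | _]; last by rewrite -take_nth.
move: (f n) E lt_fn1 => m Em lt_m; rewrite same_state -Em -take_nth // Em.
exact/strategy_equiv_sym/same_view.
Qed.

Lemma lasso_path_step n : trans (lasso_path n) (cs (f n)) = lasso_path n.+1.
Proof.
rewrite /lasso_path; have [_ _ ->] := steps (lasso_lt_size n).
by rewrite lassoS; case: eqP => // ->; rewrite same_state.
Qed.

Lemma consistent_lasso_path : consistent_path holds A s st lasso_path.
Proof.
move=> N; exists (behead (mkseq lasso_path N.+1)); split=> //.
exists (fun j => cs (f j)); rewrite size_behead size_mkseq; split=> [j lt_jN | a Aa].
  have [avail_j plays_j _] := steps (lasso_lt_size j).
  rewrite !nth_mkseq ?(leqW lt_jN) //; split=> // [a Aa|].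
    rewrite take_mkseq ?(leqW lt_jN) //; apply: plays_equiv _ (plays_j a Aa).
    exact/strategy_equiv_sym/lasso_path_equiv.
  exact: lasso_path_step.
rewrite spent_lasso //; apply: leq_trans (within_budget Aa).
exact: (leq_sum_ord_prefix (fun t => consume a (cs t a)) (ltnW (lasso_lt_size _))).
Qed.

End Pumping.

(* Agents outside [A] get singleton components. *)
Definition budget_bound a := if a \in A then res a else 0.
Definition test_count a := if a \in A then \sum_(rl <- s a) re_size rl.1 else 0.

Definition config := (St * {dffun forall a : Ag M,
  'I_(budget_bound a).+1 * {ffun 'I_(test_count a) -> bool}})%type.

Lemma card_config :
  #|{: config}| = #|St| * 2 ^ compl A s * \prod_(a in A) (res a).+1.
Proof.
rewrite card_prod card_dep_ffun foldrE big_image /= -mulnA; congr (_ * _).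
under eq_bigr do rewrite card_prod card_ord card_ffun card_bool card_ord.
rewrite big_split /= mulnC -expn_sum; congr (2 ^ _ * _).
  by rewrite /compl [RHS]big_mkcond; apply: eq_bigr => a _; rewrite /test_count; case: (a \in A).
by rewrite [RHS]big_mkcond; apply: eq_bigr => a _; rewrite /budget_bound; case: (a \in A).
Qed.

Definition configuration (h : seq St) (cs : nat -> joint) (i : nat) : config :=
  (nth st h i, [ffun a : Ag M =>
     (inord (spent cs a i),
      test_signature (test_count a) (rule_tests (psat holds) (s a)) (take i.+1 h))]).

Section Repetition.
Variables (h0 : seq St) (cs : nat -> joint).
Hypothesis steps : forall j, j < size h0 -> legal_step (st :: h0) (cs j) j.
Hypothesis within_budget : forall a, a \in A -> spent cs a (size h0) <= res a.
Local Notation h := (st :: h0).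
Local Notation conf := (configuration h cs).

Lemma configuration_spent a i1 i2 : a \in A -> i1 <= size h0 -> i2 <= size h0 ->
  conf i1 = conf i2 -> spent cs a i1 = spent cs a i2.
Proof.
move=> Aa le_i1 le_i2 /(congr1 (fun c : config => val (c.2 a).1)).
have bounded i : i <= size h0 -> spent cs a i < (budget_bound a).+1.
  move=> le_i; rewrite /budget_bound Aa ltnS; apply: leq_trans (within_budget Aa).
  exact: (leq_sum_ord_prefix (fun t => consume a (cs t a)) le_i).
by rewrite !ffunE /= !inordK ?bounded.
Qed.

Lemma configuration_view a i1 i2 : a \in A -> conf i1 = conf i2 ->
  strategy_equiv (s a) (take i1.+1 h) (take i2.+1 h).
Proof.
move=> Aa /(congr1 (fun c : config => (c.2 a).2)); rewrite !ffunE /=.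
apply: strategy_equiv_signature => //.
by rewrite /test_count Aa size_rule_tests.
Qed.

Lemma until_hist_of_repetition (phi psi : St -> bool) j1 j2 :
  j1 < j2 -> j2 <= size h0 -> conf j1 = conf j2 ->
  enforces holds A s phi psi st -> until_hist st phi psi h.
Proof.
move=> lt_j12 le_j2 Econf enf.
have le_j1 : j1 <= size h0 by apply/ltnW/(leq_trans lt_j12).
have le_j2h : j2 <= size h by apply: leqW.
apply: (until_hist_of_lasso lt_j12 le_j2h); apply: enf.
apply: (consistent_lasso_path steps within_budget lt_j12 le_j2) => [|a Aa|a Aa].
- exact: (congr1 (fun c : config => c.1) Econf).
- exact: configuration_spent Aa le_j1 le_j2 Econf.
- exact: configuration_view Econf.
Qed.

Lemma until_hist_of_long_history (phi psi : St -> bool) :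
  #|{: config}| <= size h0 ->
  enforces holds A s phi psi st -> until_hist st phi psi h.
Proof.
move=> le_card enf.
have [i [j [lt_ij Econf]]] := pigeonhole_ord (fun i : 'I_(size h0).+1 => conf i) le_card.
exact: until_hist_of_repetition lt_ij (ltn_ord j) Econf enf.
Qed.

End Repetition.
End Strategies.

Theorem proposition2 (R : realFieldType) (M : rfCGS R) (HM : wf_rfCGS M)
  (holds : R -> bool) (A : {set Ag M}) (s : Ag M -> nstrategy M)
  (Hs : forall a, a \in A -> wf_nstrategy holds a (s a))
  (phi psi : St M -> bool) (st : St M) :
  let k := compl A s in
  let L := (#|St M| * 2 ^ (2 * k ^ 2) * \prod_(a in A) (res a).+1)%N in
  enforces holds A s phi psi st <->
  (forall h, consistent_hist holds A s st h -> size h = L.+1 ->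
     until_hist st phi psi h).
Proof.
move=> k L; split=> [enf _ [h0 [-> [cs [steps within_budget]]]] | until_L p cons_p].
  case=> size_h0; apply: (until_hist_of_long_history steps within_budget _ enf).
  by rewrite card_config size_h0 leq_mul2r leq_mul2l leq_pexp2l ?orbT // -/k; nia.
have [i [lt_i [psi_i phi_lt_i]]] := until_L _ (cons_p L) (size_mkseq _ _).
rewrite size_mkseq in lt_i; rewrite nth_mkseq // in psi_i.
exists i; split=> // j lt_j; have := phi_lt_i j lt_j.
by rewrite nth_mkseq // (ltn_trans lt_j).
Qed.
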